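(* Let $X$ be a connected, non-bipartite strongly regular graph with parameters $(n,k,a,c)$, where $k\ge 3$ and $k>c\ge 1$, and assume $s^2=(a-c)^2+4(k-c)$ for some positive integer $s$, so that the adjacency matrix has the integer eigenvalue $\lambda_1=e:=\frac{a-c+s}{2}$ (and $k=(e+1)c+e(e-a)$, $s=c+2e-a$). Let $$D=e(e+1)(e-a)(e-a-1),\qquad F=(e+1)(e^2+2e-a)(e^2+3e-a).$$ Then $D$ is a multiple of $c$ and $F$ is a multiple of $c+2e-a$.
   Context: A strongly regular graph with parameters $(n,k,a,c)$ has $n$ vertices, is regular of degree $k$, any two adjacent vertices have exactly $a$ common neighbours, and any two distinct non-adjacent vertices have exactly $c$ common neighbours. The eigenvalues of its adjacency matrix are $k$ and the two roots $\lambda_1>\lambda_2$ of $\lambda^2-(a-c)\lambda-(k-c)=0$. *)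

From mathcomp Require Import all_boot all_order all_algebra.
Set Implicit Arguments. Unset Strict Implicit. Unset Printing Implicit Defensive.
Import Order.TTheory GRing.Theory Num.Theory.

Definition simple_graph (T : finType) (g : rel T) : Prop :=
  irreflexive g /\ symmetric g.

Definition srg (T : finType) (g : rel T) (n k a c : nat) : Prop :=
  [/\ simple_graph g,
      #|T| = n,
      (forall x : T, #|[set y | g x y]| = k),
      (forall x y : T, g x y -> #|[set z | g x z && g y z]| = a) &
      (forall x y : T, x != y -> ~~ g x y -> #|[set z | g x z && g y z]| = c)].

Definition connected_graph (T : finType) (g : rel T) : Prop :=
  0 < #|T| /\ forall x y : T, connect g x y.

Definition bipartite (T : finType) (g : rel T) : Prop :=
  exists f : T -> bool, forall x y : T, g x y -> f x != f y.

From mathcomp Require Import all_boot all_order all_algebra.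
From mathcomp Require Import ring lra.
Set Implicit Arguments. Unset Strict Implicit. Unset Printing Implicit Defensive.
Import Order.TTheory GRing.Theory Num.Theory.
Local Open Scope ring_scope.

(* Write the eigenvalues of the adjacency matrix A other than k as e and -u, so that
   a = c + e - u and k = c + e u. Counting walks of length two gives
   c (n - 1 - k) = k (k - 1 - a); modulo c we have k = e (e - a) and
   k - 1 - a = (e + 1)(e - a - 1), whence c | D. The multiplicity m of e is the rank of
   an idempotent built from A and the all-ones matrix J, so it is an integer with
   (e + u) m = u n - k - u. Multiplying by c gives c (e + u) m = k (u - 1)(k + u), and
   modulo e + u = c + 2e - a the right-hand side is -F. *)

Lemma mxtrace_idem (F : fieldType) n (P : 'M[F]_n) : P *m P = P -> \tr P = (\rank P)%:R.
Proof.
move=> PP.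
have [C' C'C] := row_fullP (col_base_full P).
have [R' RR'] := row_freeP (row_base_free P).
have := mulmx_base P; move: (col_base P) (row_base P) C'C RR' => C R C'C RR' defP.
rewrite -defP in PP.
have RC1 : R *m C = 1%:M.
  have := congr1 (fun M => C' *m M *m R') PP => /=.
  by rewrite !mulmxA C'C mul1mx -!mulmxA RR' mulmx1.
by rewrite -{1}defP mxtrace_mulC RC1 mxtrace1.
Qed.

Lemma eqz_modM d x x' y y' :
  (x = x' %[mod d])%Z -> (y = y' %[mod d])%Z -> (x * y = x' * y' %[mod d])%Z.
Proof. by move=> xx' yy'; rewrite -modzMm xx' yy' modzMm. Qed.

Lemma srg_count_dvdz (a c e u k N : int) :
  a = c + e - u -> k = c + e * u -> c * (N - 1 - k) = k * (k - 1 - a) ->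
  (c %| e * (e + 1) * (e - a) * (e - a - 1))%Z.
Proof.
move=> def_a def_k count.
have k_mod : (k = e * (e - a) %[mod c])%Z.
  have -> : k = (e + 1) * c + e * (e - a) by rewrite def_k def_a; ring.
  exact: modzMDl.
have k1a_mod : (k - 1 - a = (e + 1) * (e - a - 1) %[mod c])%Z.
  have -> : k - 1 - a = (e + 1) * c + (e + 1) * (e - a - 1) by rewrite def_k def_a; ring.
  exact: modzMDl.
apply/dvdz_mod0P.
rewrite [_ * _](_ : _ = e * (e - a) * ((e + 1) * (e - a - 1))); last by ring.
by rewrite -(eqz_modM k_mod k1a_mod) -count modzMr.
Qed.

Lemma srg_multiplicity_dvdz (a c e u k N m : int) :
  a = c + e - u -> k = c + e * u -> c * (N - 1 - k) = k * (k - 1 - a) ->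
  (e + u) * m = u * N - k - u ->
  (e + u %| (e + 1) * (e ^+ 2 + 2 * e - a) * (e ^+ 2 + 3 * e - a))%Z.
Proof.
move=> def_a def_k count mult.
have csm : c * ((e + u) * m) = k * (u - 1) * (k + u).
  rewrite mult [LHS](_ : _ = u * (c * (N - 1 - k)) + c * (u * k - k)); last by ring.
  by rewrite count def_a def_k; ring.
have k_mod : (k = - (e ^+ 2 + 2 * e - a) %[mod e + u])%Z.
  have -> : k = (e + 1) * (e + u) - (e ^+ 2 + 2 * e - a) by rewrite def_k def_a; ring.
  exact: modzMDl.
have u1_mod : (u - 1 = - (e + 1) %[mod e + u])%Z.
  have -> : u - 1 = 1 * (e + u) - (e + 1) by ring.
  exact: modzMDl.
have ku_mod : (k + u = - (e ^+ 2 + 3 * e - a) %[mod e + u])%Z.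
  have -> : k + u = (e + 2) * (e + u) - (e ^+ 2 + 3 * e - a) by rewrite def_k def_a; ring.
  exact: modzMDl.
rewrite -rpredN; apply/dvdz_mod0P.
rewrite [- _](_ : _ = - (e ^+ 2 + 2 * e - a) * - (e + 1) * - (e ^+ 2 + 3 * e - a)); last by ring.
by rewrite -(eqz_modM (eqz_modM k_mod u1_mod) ku_mod) -csm mulrCA modzMr.
Qed.

Section AdjacencyMatrix.
Variables (T : finType) (g : rel T) (k a c : nat).
Hypothesis g_irr : irreflexive g.
Hypothesis g_sym : symmetric g.
Hypothesis g_deg : forall x, #|[set y | g x y]| = k.
Hypothesis g_adj : forall x y, g x y -> #|[set z | g x z && g y z]| = a.
Hypothesis g_nadj : forall x y, x != y -> ~~ g x y -> #|[set z | g x z && g y z]| = c.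

Definition adjmx (R : nzRingType) : 'M[R]_#|T| :=
  \matrix_(i, j) (g (enum_val i) (enum_val j))%:R.

Local Notation J := (const_mx 1 : 'M_#|T|).

Lemma sum_enum_val_natr (R : nzRingType) (P : pred T) :
  \sum_(i < #|T|) ((P (enum_val i))%:R : R) = #|[set x | P x]|%:R.
Proof.
rewrite -(big_enum_val (fun x => (P x)%:R : R)) /= -natr_sum -sum1dep_card.
by congr _%:R; rewrite [RHS]big_mkcond; apply: eq_bigr => x _; case: (P x).
Qed.

Lemma adjmx_sqr (R : comNzRingType) :
  adjmx R *m adjmx R = k%:R *: 1%:M + a%:R *: adjmx R + c%:R *: (J - 1%:M - adjmx R).
Proof.
apply/matrixP => i j; rewrite !mxE.
under eq_bigr do rewrite !mxE -natrM mulnb.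
rewrite (sum_enum_val_natr R (fun z => g (enum_val i) z && g z (enum_val j))).
have -> : (i == j) = (enum_val i == enum_val j) by rewrite (inj_eq enum_val_inj).
move: (enum_val i) (enum_val j) => x y.
have -> : [set z | g x z && g z y] = [set z | g x z && g y z].
  by apply/setP => z; rewrite !inE (g_sym z y).
have [<-|neq_xy] := eqP.
  have -> : [set z | g x z && g x z] = [set z | g x z].
    by apply/setP => z; rewrite !inE andbb.
  by rewrite g_deg g_irr /=; ring.
case gxy: (g x y); first by rewrite g_adj //=; ring.
by rewrite g_nadj ?gxy //=; [ring | apply/eqP].
Qed.

Lemma adjmx_mul_const (R : comNzRingType) : adjmx R *m J = k%:R *: J.
Proof.
apply/matrixP => i j; rewrite !mxE.
under eq_bigr do rewrite !mxE mulr1.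
by rewrite (sum_enum_val_natr R (g (enum_val i))) g_deg mulr1.
Qed.

Lemma const_mul_adjmx (R : comNzRingType) : J *m adjmx R = k%:R *: J.
Proof.
apply/matrixP => i j; rewrite !mxE.
under eq_bigr do rewrite !mxE mul1r (g_sym _ (enum_val j)).
by rewrite (sum_enum_val_natr R (g (enum_val j))) g_deg mulr1.
Qed.

Lemma const_mul_const (R : comNzRingType) : J *m J = #|T|%:R *: J :> 'M[R]_#|T|.
Proof.
apply/matrixP => i j; rewrite !mxE.
under eq_bigr do rewrite !mxE mulr1.
by rewrite sumr_const card_ord mulr1.
Qed.

Lemma mxtrace_adjmx (R : nzRingType) : \tr (adjmx R) = 0.
Proof. by apply: big1 => i _; rewrite mxE g_irr. Qed.

Lemma mxtrace_const (R : nzRingType) : \tr J = #|T|%:R :> R.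
Proof. by rewrite /mxtrace; under eq_bigr do rewrite mxE; rewrite sumr_const card_ord. Qed.

Lemma srg_count (R : comNzRingType) : (0 < #|T|)%N ->
  c%:R * (#|T|%:R - 1 - k%:R) = k%:R * (k%:R - 1 - a%:R) :> R.
Proof.
move=> T_gt0; have := congr1 (mulmx^~ J) (adjmx_sqr R) => /=.
rewrite -mulmxA !adjmx_mul_const -scalemxAr adjmx_mul_const !mulmxDl -!scalemxAl.
rewrite !mulmxBl mul1mx adjmx_mul_const const_mul_const.
move=> /matrixP /(_ (Ordinal T_gt0) (Ordinal T_gt0)); rewrite !mxE => eq_entry.
rewrite !mulr1 in eq_entry.
have -> : c%:R * (#|T|%:R - 1 - k%:R) = k%:R * k%:R - k%:R - a%:R * k%:R :> R.
  by rewrite eq_entry; ring.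
ring.
Qed.

Section Eigenvalues.
Variables (R : comNzRingType) (e u : R).
Hypothesis def_a : a%:R = c%:R + e - u.
Hypothesis def_k : k%:R = c%:R + e * u.

Lemma adjmx_shift_sqr (B := adjmx R + u *: 1%:M) : B *m B = (e + u) *: B + c%:R *: J.
Proof.
rewrite /B mulmxDl !mulmxDr adjmx_sqr -!scalemxAl -scalemxAr !mul1mx mulmx1.
apply/matrixP => i j; rewrite !mxE def_a def_k.
by move: (_%:R : R) (_%:R : R) => gij dij; ring.
Qed.

Lemma srg_count_factor : (0 < #|T|)%N ->
  c%:R * #|T|%:R = (k%:R + u) * (k%:R - e).
Proof.
move=> T_gt0.
rewrite [LHS](_ : _ = c%:R * (#|T|%:R - 1 - k%:R) + c%:R * (1 + k%:R)); last by ring.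
by rewrite srg_count // def_a def_k; ring.
Qed.

End Eigenvalues.

Lemma srg_eigenspace_dim (F : fieldType) (e u : F) : (0 < #|T|)%N ->
  a%:R = c%:R + e - u -> k%:R = c%:R + e * u ->
  e + u != 0 -> c%:R != 0 :> F -> k%:R - e != 0 :> F ->
  exists m : nat, (e + u) * m%:R = u * #|T|%:R - k%:R - u.
Proof.
move=> T_gt0 def_a def_k s_neq0 c_neq0 ke_neq0.
have def_N : #|T|%:R = (k%:R + u) * (k%:R - e) / c%:R :> F.
  by rewrite -(srg_count_factor def_a def_k) // mulrC mulKf.
pose B := adjmx F + u *: 1%:M.
have B_sqr : B *m B = (e + u) *: B + c%:R *: J by apply: adjmx_shift_sqr.
have B_J : B *m J = (k%:R + u) *: J.
  by rewrite mulmxDl adjmx_mul_const -scalemxAl mul1mx scalerDl.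
have J_B : J *m B = (k%:R + u) *: J.
  by rewrite mulmxDr const_mul_adjmx -scalemxAr mulmx1 scalerDl.
(* The projection onto the e-eigenspace: it kills J and the (-u)-eigenspace of A. *)
pose P := (e + u)^-1 *: B - (c%:R / ((e + u) * (k%:R - e))) *: J.
have idemP : P *m P = P.
  rewrite /P mulmxBl !mulmxBr -!scalemxAl -!scalemxAr B_sqr B_J J_B const_mul_const.
  apply/matrixP => i j; rewrite !mxE def_N.
  by move: (_%:R + u * _) => b; field; rewrite ke_neq0 s_neq0 c_neq0.
exists (\rank P); rewrite -(mxtrace_idem idemP) /P /B raddfB /= !mxtraceZ mxtraceD.
rewrite mxtraceZ mxtrace_adjmx mxtrace1 mxtrace_const def_N.
by field; rewrite ke_neq0 s_neq0 c_neq0.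
Qed.

Lemma srg_eigenspace_dimz (e u : int) : (0 < #|T|)%N -> (0 < c)%N ->
  a%:Z = c%:Z + e - u -> k%:Z = c%:Z + e * u -> e + u != 0 ->
  exists m : nat, (e + u) * m%:Z = u * #|T|%:Z - k%:Z - u.
Proof.
move=> T_gt0 c_gt0 def_a def_k s_neq0.
have ke_neq0 : k%:Z - e != 0.
  have := @srg_count_factor int e u; rewrite !natz => /(_ def_a def_k T_gt0) cnt.
  have cN_gt0 : 0 < c%:Z * #|T|%:Z by rewrite mulr_gt0 // ltz_nat.
  by apply: contraTneq cN_gt0 => ke0; rewrite cnt ke0 mulr0 ltxx.
have intrQ (x y : int) : x = y -> x%:~R = y%:~R :> rat by move->.
have def_aQ : a%:R = c%:R + e%:~R - u%:~R :> rat.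
  by have := intrQ _ _ def_a; rewrite rmorphB rmorphD.
have def_kQ : k%:R = c%:R + e%:~R * u%:~R :> rat.
  by have := intrQ _ _ def_k; rewrite rmorphD rmorphM.
have sQ_neq0 : e%:~R + u%:~R != 0 :> rat by rewrite -rmorphD intr_eq0.
have cQ_neq0 : c%:R != 0 :> rat by rewrite pnatr_eq0 -lt0n.
have keQ_neq0 : k%:R - e%:~R != 0 :> rat.
  by rewrite -[k%:R]/((k%:Z)%:~R : rat) -rmorphB intr_eq0.
have [m dim] := srg_eigenspace_dim T_gt0 def_aQ def_kQ sQ_neq0 cQ_neq0 keQ_neq0.
exists m; apply: (@intr_inj rat); rewrite !rmorphB !rmorphM rmorphD.
exact: dim.
Qed.
End AdjacencyMatrix.

Theorem theorem3p1 (T : finType) (g : rel T) (n k a c : nat) (s : nat) (e : int) :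
  srg g n k a c ->
  connected_graph g ->
  ~ bipartite g ->
  (3 <= k)%N -> (1 <= c)%N -> (c < k)%N ->
  (0 < s)%N ->
  (s%:Z) ^+ 2 = (a%:Z - c%:Z) ^+ 2 + 4 * (k%:Z - c%:Z) ->
  2 * e = a%:Z - c%:Z + s%:Z ->
  (c%:Z %| e * (e + 1) * (e - a%:Z) * (e - a%:Z - 1))%Z /\
  (c%:Z + 2 * e - a%:Z %| (e + 1) * (e ^+ 2 + 2 * e - a%:Z) * (e ^+ 2 + 3 * e - a%:Z))%Z.
Proof.
(* Connectedness only provides a vertex. *)
move=> [[g_irr g_sym] _ g_deg g_adj g_nadj] [T_gt0 _] _ _ c_gt0 _ s_gt0 s_sqr two_e.
pose u := c%:Z + e - a%:Z.
have s_eq : e + u = s%:Z by rewrite /u; lra.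
have def_a : a%:Z = c%:Z + e - u by rewrite /u; ring.
have def_k : k%:Z = c%:Z + e * u.
  apply: (@mulfI _ 4) => //.
  have -> : 4 * k%:Z = s%:Z ^+ 2 - (a%:Z - c%:Z) ^+ 2 + 4 * c%:Z by rewrite s_sqr; ring.
  by rewrite -s_eq /u; ring.
have s_neq0 : e + u != 0 by rewrite s_eq lt0r_neq0 // ltz_nat.
have count := srg_count g_irr g_sym g_deg g_adj g_nadj int T_gt0.
rewrite !natz in count.
have [m mult] :=
  srg_eigenspace_dimz g_irr g_sym g_deg g_adj g_nadj T_gt0 c_gt0 def_a def_k s_neq0.
split; first exact: srg_count_dvdz def_a def_k count.
have -> : c%:Z + 2 * e - a%:Z = e + u by rewrite /u; ring.
exact: srg_multiplicity_dvdz def_a def_k count mult.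
Qed.
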